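(* Let $(f_k(t))_{k=0,\ldots,n}$ be a constant speed path with speed $v>0$ and coefficients $\boldsymbol\alpha\in\mathcal A$, with $f_k(t)>0$ for all $k,t$ and $\alpha_k$ differentiable in $t$, and fix $t$. Suppose at this $t$: (1) $\alpha_k\le\alpha_{k+1}$ for $k=0,\ldots,n-1$; (2) $\frac{\partial\alpha_k}{\partial t}\ge0$ for $k=0,\ldots,n$; (3) $\alpha_{k+1}(1-\alpha_{k+1})f_{k+1}^2-\alpha_{k+2}(1-\alpha_k)f_kf_{k+2}\ge0$ for $k=0,\ldots,n-2$; and $f_{k+1}^2-f_kf_{k+2}>0$ for $k=0,\ldots,n-2$. Then for $k=0,\ldots,n-2$, $h_k\le\widetilde h_k$, where $$\widetilde h_k=\frac{2g_kg_{k+1}f_{k+1}-g_k^2f_{k+2}-g_{k+1}^2f_k}{f_{k+1}^2-f_kf_{k+2}},$$ $$h_k=(1-\alpha_k)(1-\alpha_{k+1})f_k+2\alpha_{k+1}(1-\alpha_{k+1})f_{k+1}+\alpha_{k+1}\alpha_{k+2}f_{k+2}-\frac1vf_{k+1}\frac{\partial\alpha_{k+1}}{\partial t}.$$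
   Context: Fix an integer $n\ge1$. For a sequence $(a_k)_{k\in\mathbb Z}$ write $\nabla_1 a_k=a_k-a_{k-1}$. Functions indexed by $k$ are extended by $0$ outside their stated index range. $\mathcal A$ denotes the set of measurable $\boldsymbol\alpha(t)=(\alpha_0(t),\ldots,\alpha_n(t))$, $t\in[0,1]$, with $\alpha_0\equiv0$, $\alpha_n\equiv1$ and $0\le\alpha_k(t)\le1$ for all $k,t$. A family $(f_k(t))_{k=0,\ldots,n}$ of probability mass functions on $\{0,\ldots,n\}$ is a constant speed path with speed $v\in\mathbb R$ and coefficients $\boldsymbol\alpha\in\mathcal A$ if $\frac{\partial f_k}{\partial t}(t)=-v\,\nabla_1 g_k(t)$ for $k=0,\ldots,n$, where $g_k(t)=\alpha_{k+1}(t)f_{k+1}(t)+(1-\alpha_k(t))f_k(t)$ for $k=0,\ldots,n-1$ and $g_k=0$ for $k\notin\{0,\ldots,n-1\}$. *)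

From Stdlib Require Import Reals Lra.
Open Scope R_scope.

Definition in01 (t : R) : Prop := 0 <= t <= 1.

(* Derivative of F at t relative to [0,1] (one-sided at the endpoints). *)
Definition deriv01 (F : R -> R) (t l : R) : Prop :=
  forall eps : R, 0 < eps -> exists delta : R, 0 < delta /\
    forall s : R, in01 s -> s <> t -> Rabs (s - t) < delta ->
      Rabs ((F s - F t) / (s - t) - l) < eps.

(* alpha in the class A (indices k = 0..n); measurability is implied by the
   differentiability hypothesis of the theorem. *)
Definition in_A (n : nat) (alpha : nat -> R -> R) : Prop :=
  forall t, in01 t ->
    alpha 0%nat t = 0 /\ alpha n t = 1 /\
    (forall k, (k <= n)%nat -> 0 <= alpha k t <= 1).

(* g_k(t), extended by 0 outside k = 0..n-1 *)
Definition gfun (n : nat) (alpha f : nat -> R -> R) (k : nat) (t : R) : R :=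
  if Nat.ltb k n then alpha (S k) t * f (S k) t + (1 - alpha k t) * f k t
  else 0.

(* backward difference nabla_1 g_k = g_k - g_{k-1}, with g_{-1} = 0 *)
Definition nabla_g (n : nat) (alpha f : nat -> R -> R) (k : nat) (t : R) : R :=
  match k with
  | O => gfun n alpha f 0 t
  | S j => gfun n alpha f (S j) t - gfun n alpha f j t
  end.

Definition pmf_family (n : nat) (f : nat -> R -> R) : Prop :=
  forall t, in01 t ->
    (forall k, (k <= n)%nat -> 0 <= f k t) /\
    sum_f_R0 (fun k => f k t) n = 1.

Definition const_speed_path (n : nat) (v : R) (alpha f : nat -> R -> R) : Prop :=
  in_A n alpha /\ pmf_family n f /\
  forall k t, (k <= n)%nat -> in01 t ->
    deriv01 (f k) t (- v * nabla_g n alpha f k t).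

Definition htilde (n : nat) (alpha f : nat -> R -> R) (k : nat) (t : R) : R :=
  let g0 := gfun n alpha f k t in
  let g1 := gfun n alpha f (S k) t in
  (2 * g0 * g1 * f (S k) t - g0 ^ 2 * f (S (S k)) t - g1 ^ 2 * f k t)
  / (f (S k) t ^ 2 - f k t * f (S (S k)) t).

(* da k t is the t-derivative of alpha_k at t *)
Definition hfun (alpha f da : nat -> R -> R) (v : R) (k : nat) (t : R) : R :=
  (1 - alpha k t) * (1 - alpha (S k) t) * f k t
  + 2 * alpha (S k) t * (1 - alpha (S k) t) * f (S k) t
  + alpha (S k) t * alpha (S (S k)) t * f (S (S k)) t
  - / v * f (S k) t * da (S k) t.

From Stdlib Require Import Reals Lra Lia.
Open Scope R_scope.

(* Fix k and t and abbreviate a_i = alpha_(k+i)(t), f_i = f_(k+i)(t),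
   D = f_1^2 - f_0 f_2 > 0 and Y = f_0 f_2 >= 0.  Then
     h_k = S - f_1 alpha_(k+1)'(t) / v,
   where S = (1-a0)(1-a1) f0 + 2 a1 (1-a1) f1 + a1 a2 f2 is the "static part",
   and htilde_k = N / D for a quadratic form N in g_k, g_(k+1).  The derivative
   term is nonnegative, so it suffices to show S * D <= N.
   1. A polynomial identity writes N - S*D, with p = a2 - a1 and q = a1 - a0, as
        p f2 (a1 D - p Y) + q f0 ((1-a1) D - q Y) + 2 p q f1 Y.
   2. Hypothesis (3), a2 (1-a0) Y <= a1 (1-a1) f1^2, i.e.
        (a2 (1-a0) - a1 (1-a1)) Y <= a1 (1-a1) D,
      forces both brackets to be nonnegative when a0 <= a1 <= a2 lie in
      [0,1]; the second bracket is the first one under the symmetry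
      a_i |-> 1 - a_(2-i), which leaves hypothesis (3) invariant. *)

Definition h_static (a0 a1 a2 f0 f1 f2 : R) : R :=
  (1 - a0) * (1 - a1) * f0 + 2 * a1 * (1 - a1) * f1 + a1 * a2 * f2.

Definition gap_numerator (g0 g1 f0 f1 f2 : R) : R :=
  2 * g0 * g1 * f1 - g0 ^ 2 * f2 - g1 ^ 2 * f0.

Lemma gap_decomposition (a0 a1 a2 f0 f1 f2 : R) :
  gap_numerator (a1 * f1 + (1 - a0) * f0) (a2 * f2 + (1 - a1) * f1) f0 f1 f2
  - h_static a0 a1 a2 f0 f1 f2 * (f1 ^ 2 - f0 * f2)
  = (a2 - a1) * f2 * (a1 * (f1 ^ 2 - f0 * f2) - (a2 - a1) * (f0 * f2))
    + (a1 - a0) * f0 * ((1 - a1) * (f1 ^ 2 - f0 * f2) - (a1 - a0) * (f0 * f2))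
    + 2 * (a2 - a1) * (a1 - a0) * f1 * (f0 * f2).
Proof. unfold gap_numerator, h_static; ring. Qed.

(* If a1 < 1
   this follows by cancelling 1 - a1 > 0, since
   (1-a1)(a2-a1) <= a2 (1-a0) - a1 (1-a1) = q a1 + p (1-a1) + p q;
   if a1 = 1 then a2 = 1 and the bracket is D itself. *)
Lemma upper_bracket_nonneg (a0 a1 a2 D Y : R) :
  0 <= a0 -> a0 <= a1 -> a1 <= a2 -> a2 <= 1 -> 0 <= D -> 0 <= Y ->
  (a2 * (1 - a0) - a1 * (1 - a1)) * Y <= a1 * (1 - a1) * D ->
  (a2 - a1) * Y <= a1 * D.
Proof.
  intros Ha0 Ha01 Ha12 Ha2 HD HY Hcond.
  destruct (Rle_lt_or_eq_dec a1 1 ltac:(lra)) as [Hlt | Heq].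
  - apply Rmult_le_reg_l with (1 - a1); [lra |].
    assert (Hweight : (1 - a1) * (a2 - a1) <= a2 * (1 - a0) - a1 * (1 - a1)) by nra.
    nra.
  - subst a1; replace a2 with 1 by lra; lra.
Qed.

(* Step 2b: the second bracket, obtained from Step 2a under the symmetry
   a_i |-> 1 - a_(2-i), which leaves hypothesis (3) invariant. *)
Lemma lower_bracket_nonneg (a0 a1 a2 D Y : R) :
  0 <= a0 -> a0 <= a1 -> a1 <= a2 -> a2 <= 1 -> 0 <= D -> 0 <= Y ->
  (a2 * (1 - a0) - a1 * (1 - a1)) * Y <= a1 * (1 - a1) * D ->
  (a1 - a0) * Y <= (1 - a1) * D.
Proof.
  intros Ha0 Ha01 Ha12 Ha2 HD HY Hcond.
  replace (a1 - a0) with ((1 - a0) - (1 - a1)) by ring.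
  apply (upper_bracket_nonneg (1 - a2)); [lra | lra | lra | lra | exact HD | exact HY |].
  replace (((1 - a0) * (1 - (1 - a2)) - (1 - a1) * (1 - (1 - a1))) * Y)
    with ((a2 * (1 - a0) - a1 * (1 - a1)) * Y) by ring.
  replace ((1 - a1) * (1 - (1 - a1)) * D) with (a1 * (1 - a1) * D) by ring.
  exact Hcond.
Qed.

Lemma static_bound (a0 a1 a2 f0 f1 f2 : R) :
  0 <= a0 -> a0 <= a1 -> a1 <= a2 -> a2 <= 1 ->
  0 <= f0 -> 0 <= f1 -> 0 <= f2 -> 0 <= f1 ^ 2 - f0 * f2 ->
  0 <= a1 * (1 - a1) * f1 ^ 2 - a2 * (1 - a0) * f0 * f2 ->
  h_static a0 a1 a2 f0 f1 f2 * (f1 ^ 2 - f0 * f2)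
  <= gap_numerator (a1 * f1 + (1 - a0) * f0) (a2 * f2 + (1 - a1) * f1) f0 f1 f2.
Proof.
  intros Ha0 Ha01 Ha12 Ha2 Hf0 Hf1 Hf2 HD Hcond.
  assert (HY : 0 <= f0 * f2) by nra.
  assert (Hcond' : (a2 * (1 - a0) - a1 * (1 - a1)) * (f0 * f2)
                   <= a1 * (1 - a1) * (f1 ^ 2 - f0 * f2))
    by nra.
  pose proof (upper_bracket_nonneg _ _ _ _ _ Ha0 Ha01 Ha12 Ha2 HD HY Hcond') as Hup.
  pose proof (lower_bracket_nonneg _ _ _ _ _ Ha0 Ha01 Ha12 Ha2 HD HY Hcond') as Hlow.
  pose proof (gap_decomposition a0 a1 a2 f0 f1 f2) as Hdec.
  assert (0 <= (a2 - a1) * f2 * (a1 * (f1 ^ 2 - f0 * f2) - (a2 - a1) * (f0 * f2)))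
    by (apply Rmult_le_pos; [apply Rmult_le_pos |]; lra).
  assert (0 <= (a1 - a0) * f0 * ((1 - a1) * (f1 ^ 2 - f0 * f2) - (a1 - a0) * (f0 * f2)))
    by (apply Rmult_le_pos; [apply Rmult_le_pos |]; lra).
  assert (0 <= 2 * (a2 - a1) * (a1 - a0) * f1 * (f0 * f2))
    by (repeat apply Rmult_le_pos; lra).
  lra.
Qed.

Lemma gfun_inside (n : nat) (alpha f : nat -> R -> R) (k : nat) (t : R) :
  (k < n)%nat ->
  gfun n alpha f k t = alpha (S k) t * f (S k) t + (1 - alpha k t) * f k t.
Proof.
  intros Hk; unfold gfun.
  replace (Nat.ltb k n) with true by (symmetry; apply Nat.ltb_lt; exact Hk).
  reflexivity.
Qed.

Lemma htilde_as_ratio (n : nat) (alpha f : nat -> R -> R) (k : nat) (t : R) :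
  (k + 2 <= n)%nat ->
  htilde n alpha f k t =
  gap_numerator (alpha (S k) t * f (S k) t + (1 - alpha k t) * f k t)
                (alpha (S (S k)) t * f (S (S k)) t + (1 - alpha (S k) t) * f (S k) t)
                (f k t) (f (S k) t) (f (S (S k)) t)
  / (f (S k) t ^ 2 - f k t * f (S (S k)) t).
Proof.
  intros Hk; unfold htilde, gap_numerator.
  rewrite (gfun_inside n alpha f k t), (gfun_inside n alpha f (S k) t) by lia.
  reflexivity.
Qed.

Lemma hfun_split (alpha f da : nat -> R -> R) (v : R) (k : nat) (t : R) :
  hfun alpha f da v k t =
  h_static (alpha k t) (alpha (S k) t) (alpha (S (S k)) t)
           (f k t) (f (S k) t) (f (S (S k)) t)
  - / v * f (S k) t * da (S k) t.
Proof. unfold hfun, h_static; ring. Qed.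

Theorem proposition4p3 (n : nat) (hn : (1 <= n)%nat) (v : R)
  (alpha f da : nat -> R -> R) (t : R) :
  0 < v ->
  const_speed_path n v alpha f ->
  (forall k s, (k <= n)%nat -> in01 s -> 0 < f k s) ->
  (forall k s, (k <= n)%nat -> in01 s -> deriv01 (alpha k) s (da k s)) ->
  in01 t ->
  (forall k, (k < n)%nat -> alpha k t <= alpha (S k) t) ->
  (forall k, (k <= n)%nat -> 0 <= da k t) ->
  (forall k, (k + 2 <= n)%nat ->
     0 <= alpha (S k) t * (1 - alpha (S k) t) * f (S k) t ^ 2
          - alpha (S (S k)) t * (1 - alpha k t) * f k t * f (S (S k)) t) ->
  (forall k, (k + 2 <= n)%nat -> 0 < f (S k) t ^ 2 - f k t * f (S (S k)) t) ->
  forall k, (k + 2 <= n)%nat ->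
    hfun alpha f da v k t <= htilde n alpha f k t.
Proof.
  intros hv [hA _] hpos _ ht hmon hda hcond hD k hk.
  destruct (hA t ht) as [_ [_ hrange]].
  assert (hf : forall j, (j <= n)%nat -> 0 <= f j t)
    by (intros j hj; left; exact (hpos j t hj ht)).
  assert (hcorr : 0 <= / v * f (S k) t * da (S k) t).
  { apply Rmult_le_pos; [apply Rmult_le_pos |].
    - left; apply Rinv_0_lt_compat; exact hv.
    - apply hf; lia.
    - apply hda; lia. }
  pose proof (static_bound (alpha k t) (alpha (S k) t) (alpha (S (S k)) t)
                (f k t) (f (S k) t) (f (S (S k)) t)
                (proj1 (hrange k ltac:(lia))) (hmon k ltac:(lia))
                (hmon (S k) ltac:(lia)) (proj2 (hrange (S (S k)) ltac:(lia)))
                (hf k ltac:(lia)) (hf (S k) ltac:(lia)) (hf (S (S k)) ltac:(lia))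
                (Rlt_le _ _ (hD k hk)) (hcond k hk)) as hstatic.
  rewrite hfun_split, (htilde_as_ratio n alpha f k t hk).
  apply Rle_trans with (h_static (alpha k t) (alpha (S k) t) (alpha (S (S k)) t)
                                 (f k t) (f (S k) t) (f (S (S k)) t)); [lra |].
  apply Rmult_le_reg_r with (f (S k) t ^ 2 - f k t * f (S (S k)) t); [exact (hD k hk) |].
  unfold Rdiv; rewrite Rmult_assoc, Rinv_l, Rmult_1_r by (apply Rgt_not_eq, hD, hk).
  exact hstatic.
Qed.
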